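(* Let $n$ be odd and $k\ge 4$ even with $2k\le n$ and $n\equiv \pm 2 \pmod{k-1}$, and put $s=\frac{(n-4)(k-2)}{2(k-1)}$. Then there is a map $\sigma:\mathbb{Z}_n\to\mathbb{Z}_n$ such that for every edge $x_ix_j$ of $\mathrm{Pb}(n,k)$, the circular distance between $\sigma(i)$ and $\sigma(j)$ in $\mathbb{Z}_n$ is at least $s$; i.e., $\sigma$ is a homomorphism $\mathrm{Pb}(n,k)\to K_{n/s}$.
   Context: $\mathrm{Pb}(n,k)$ is the graph with vertex set $\{x_0,\dots,x_{n-1}\}$ (indices in $\mathbb{Z}_n$) in which $x_i$ is adjacent to $x_{i\pm1}$ and to $x_{i\pm k}$ (it is obtained from the generalized Petersen graph $\mathrm{Pet}(n,k)$ by identifying $u_i$ with $v_i$ for each $i$). For a real $s$ with $0<s\le n/2$, $K_{n/s}$ denotes the graph on $\mathbb{Z}_n=\{0,\dots,n-1\}$ in which $i\sim j$ iff $s\le |i-j|\le n-s$ (equivalently, the circular distance $\min(|i-j|,n-|i-j|)$ is at least $s$). *)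

From mathcomp Require Import all_boot all_order all_algebra.
Set Implicit Arguments. Unset Strict Implicit. Unset Printing Implicit Defensive.

Definition Pb_adj (n k : nat) (i j : 'I_n) : bool :=
  [|| (j == (i + 1) %% n :> nat), (i == (j + 1) %% n :> nat),
      (j == (i + k) %% n :> nat) | (i == (j + k) %% n :> nat)].

Definition circ_dist (n : nat) (a b : 'I_n) : nat :=
  let d := `|(a : nat) - (b : nat)|%N in minn d (n - d).

Definition Kns_adj (n : nat) (s : rat) (a b : 'I_n) : bool :=
  (s <= (circ_dist a b)%:R)%R.

(* σ(i) = c·i is a homomorphism Pb(n,k) -> K_{n/s} as soon as the circular
   norms of c and c·k are at least s, since the edges of Pb(n,k) have
   differences ±1 and ±k.  Write k = 2p + 2 and n = B(2p + 1) ± 2.  The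
   multiplier c = Bp ± 1 satisfies c·k = p·n + (Bp ± 2), so c and c·k both
   sit near Bp ≈ n p/(2p + 1), and their circular norms are at least
   s = (n - 4) p/(2p + 1). *)

From mathcomp Require Import all_boot all_order all_algebra.
From mathcomp Require Import zify.
Import GRing.Theory Num.Theory.

Set Implicit Arguments.
Unset Strict Implicit.
Unset Printing Implicit Defensive.

Definition cnorm (n x : nat) : nat := minn (x %% n) (n - x %% n).

Lemma cnorm_mod n x y : x = y %[mod n] -> cnorm n x = cnorm n y.
Proof. by rewrite /cnorm => ->. Qed.

Lemma leq_cnorm n x m q :
  x < n -> m <= q * x -> m <= q * (n - x) -> m <= q * cnorm n x.
Proof. by move=> xn h1 h2; rewrite /cnorm modn_small // /minn; case: ifP. Qed.

Lemma circ_distC n (a b : 'I_n) : circ_dist a b = circ_dist b a.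
Proof. by rewrite /circ_dist distnC. Qed.

Lemma circ_distE n (a b : 'I_n) : circ_dist a b = cnorm n (b + (n - a)).
Proof.
case: a b => [x xn] [y yn]; rewrite /circ_dist /cnorm /=.
case: (leqP x y) => xy.
- have -> : y + (n - x) = n + (y - x) by lia.
  have d_lt : y - x < n by lia.
  by rewrite distnEr // modnDl (modn_small d_lt).
- have d_lt : y + (n - x) < n by lia.
  rewrite (distnEl (ltnW xy)) (modn_small d_lt) minnC.
  by congr minn; lia.
Qed.

Section Multiplier.

Variables (n c : nat).
Hypothesis n_gt0 : 0 < n.

Definition mul_ord (i : 'I_n) : 'I_n := Ordinal (ltn_pmod (c * i) n_gt0).

Lemma circ_dist_mul_ord (t u : 'I_n) d :
  u = t + d %[mod n] -> circ_dist (mul_ord t) (mul_ord u) = cnorm n (c * d).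
Proof.
move=> u_eq; rewrite circ_distE /=; apply: cnorm_mod.
have ct_le := ltnW (ltn_pmod (c * t) n_gt0).
apply/eqP; rewrite -(eqn_modDr ((c * t) %% n)) -addnA (subnK ct_le).
by rewrite modnDr modn_mod modnDmr -modnMmr u_eq modnMmr mulnDr addnC.
Qed.

Lemma mul_ord_Pb_adj k (P : nat -> Prop) (i j : 'I_n) :
  P (cnorm n c) -> P (cnorm n (c * k)) -> Pb_adj k i j ->
  P (circ_dist (mul_ord i) (mul_ord j)).
Proof.
have mod_ordE (x : 'I_n) y : (x : nat) = y %% n -> x = y %[mod n].
  by move=> E; rewrite E modn_mod.
move=> P_c P_ck /or4P[] /eqP/mod_ordE E.
- by rewrite (circ_dist_mul_ord E) muln1.
- by rewrite circ_distC (circ_dist_mul_ord E) muln1.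
- by rewrite (circ_dist_mul_ord E).
- by rewrite circ_distC (circ_dist_mul_ord E).
Qed.

End Multiplier.

Lemma ler_ratio_nat (R : numFieldType) (a b d : nat) :
  0 < b -> a <= b * d -> (a%:R / b%:R <= d%:R :> R)%R.
Proof.
move=> b_gt0 ab; rewrite ler_pdivrMr ?ltr0n //.
by rewrite -natrM ler_nat mulnC.
Qed.

Lemma Pb_params n k :
  ~~ odd k -> 4 <= k -> 2 * k <= n ->
  (n %% (k - 1) == 2 %% (k - 1)) || ((n + 2) %% (k - 1) == 0) ->
  exists p B, [/\ k = 2 * p + 2, 1 <= p, 2 <= B &
                  n = B * (2 * p + 1) + 2 \/ n + 2 = B * (2 * p + 1)].
Proof.
move=> k_even k4 kn n_mod.
have [p k_eq] : exists p, k = 2 * p + 2.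
  by exists (k./2 - 1); have := odd_double_half k; rewrite (negbTE k_even); lia.
have p_gt0 : 1 <= p by lia.
have q_eq : k - 1 = 2 * p + 1 by lia.
have two_mod : 2 %% (2 * p + 1) = 2 by rewrite modn_small; lia.
rewrite q_eq two_mod in n_mod; exists p.
case/orP: n_mod => /eqP n_mod.
- exists (n %/ (2 * p + 1)); have := divn_eq n (2 * p + 1).
  by rewrite n_mod => n_eq; split => //; [nia | left].
- exists ((n + 2) %/ (2 * p + 1)); have := divn_eq (n + 2) (2 * p + 1).
  by rewrite n_mod addn0 => n_eq; split => //; [nia | right].
Qed.

Section SpreadMultiplier.

Variables (p B n : nat).
Hypotheses (p_gt0 : 1 <= p) (B_ge2 : 2 <= B).

Lemma spread_multiplierD : n = B * (2 * p + 1) + 2 ->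
  (n - 4) * (2 * p) <= 2 * (2 * p + 1) * cnorm n (B * p + 1) /\
  (n - 4) * (2 * p) <= 2 * (2 * p + 1) * cnorm n ((B * p + 1) * (2 * p + 2)).
Proof.
move=> n_eq.
rewrite (_ : (B * p + 1) * (2 * p + 2) = p * n + (B * p + 2)); last by nia.
rewrite (cnorm_mod (modnMDl _ _ _)).
by split; apply: leq_cnorm; nia.
Qed.

Lemma spread_multiplierB : n + 2 = B * (2 * p + 1) ->
  (n - 4) * (2 * p) <= 2 * (2 * p + 1) * cnorm n (B * p - 1) /\
  (n - 4) * (2 * p) <= 2 * (2 * p + 1) * cnorm n ((B * p - 1) * (2 * p + 2)).
Proof.
move=> n_eq.
rewrite (_ : (B * p - 1) * (2 * p + 2) = p * n + (B * p - 2)); last by nia.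
rewrite (cnorm_mod (modnMDl _ _ _)).
by split; apply: leq_cnorm; nia.
Qed.

End SpreadMultiplier.

Lemma exists_spread_multiplier n k :
  ~~ odd k -> 4 <= k -> 2 * k <= n ->
  (n %% (k - 1) == 2 %% (k - 1)) || ((n + 2) %% (k - 1) == 0) ->
  exists c, (n - 4) * (k - 2) <= 2 * (k - 1) * cnorm n c /\
            (n - 4) * (k - 2) <= 2 * (k - 1) * cnorm n (c * k).
Proof.
move=> k_even k4 kn n_mod.
have [p [B [-> p_gt0 B_ge2 n_eq]]] := Pb_params k_even k4 kn n_mod.
have -> : 2 * p + 2 - 2 = 2 * p by rewrite addnK.
have -> : 2 * p + 2 - 1 = 2 * p + 1 by rewrite -addnBA.
case: n_eq => n_eq.
- by exists (B * p + 1); apply: spread_multiplierD.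
- by exists (B * p - 1); apply: spread_multiplierB.
Qed.

Theorem theorem5 (n k : nat) :
  odd n -> ~~ odd k -> 4 <= k -> 2 * k <= n ->
  (n %% (k - 1) == 2 %% (k - 1)) || ((n + 2) %% (k - 1) == 0) ->
  exists sigma : 'I_n -> 'I_n,
    forall i j : 'I_n, Pb_adj k i j ->
      Kns_adj ((((n - 4) * (k - 2))%:R / (2 * (k - 1))%:R)%R : rat)
              (sigma i) (sigma j).
Proof.
move=> _ k_even k4 kn n_mod.
have n_gt0 : 0 < n by rewrite (leq_trans _ kn) // muln_gt0 (leq_trans _ k4).
have k1_gt0 : 0 < 2 * (k - 1) by rewrite muln_gt0 subn_gt0 (leq_trans _ k4).
have [c [bound_c bound_ck]] := exists_spread_multiplier k_even k4 kn n_mod.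
set s := (_ / _)%R.
exists (mul_ord c n_gt0) => i j.
by apply: (@mul_ord_Pb_adj n c n_gt0 k (fun d => s <= d%:R)%R); apply: ler_ratio_nat.
Qed.
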